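(* For every client $i$ there exist deterministic matrices $L_1,\dots,L_n$, $L_{i'}\in\mathbb R^{d\times n_{i'}}$, with $\sum_{i'=1}^nL_{i'}X_{i'}=I_d$ (i.e. $\tilde\theta_i=\sum_{i'}L_{i'}y_{i'}$ is a linear unbiased estimator of $\theta_i^*$ given $\{(X_{i'},y_{i'})\}_{i'=1}^n$), such that $\mathbb E\|\tilde\theta_i-\theta_i^*\|^2\le\mathbb E\|\hat\theta_i-\theta_i^*\|^2$.
   Context: Hierarchical linear model: clients $1,\dots,n$ are partitioned into nonempty disjoint clusters $\mathcal I_1,\dots,\mathcal I_k$. For an unknown $\bar\theta^*\in\mathbb R^d$ and known variances $\bar\sigma^2>0$, $\bar\sigma_j^2>0$, $\sigma_i^2>0$: $\bar\theta_j^*=\bar\theta^*+\bar\xi_j$ with $\bar\xi_j\sim\mathcal N(0,\bar\sigma^2I_d)$; $\theta_i^*=\bar\theta_j^*+\xi_i$ with $\xi_i\sim\mathcal N(0,\bar\sigma_j^2I_d)$ for $i\in\mathcal I_j$; $y_i=X_i\theta_i^*+\epsilon_i$ with $\epsilon_i\sim\mathcal N(0,\sigma_i^2I_{n_i})$, $X_i\in\mathbb R^{n_i\times d}$ deterministic with $X_i^TX_i=\beta_iI_d$, $\beta_i>0$; all noise variables mutually independent. $\{\hat\theta_i\}$ are the $\theta$-components of the minimizer of $\sum_{j=1}^k\big(\frac{\lambda_j}{2}\|w_j-\bar w\|^2+\sum_{i\in\mathcal I_j}(\frac{1}{2\sigma_i^2}\|y_i-X_i\theta_i\|^2+\frac{\gamma_i}{2}\|\theta_i-w_j\|^2)\big)$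 over $\theta_i,w_j,\bar w\in\mathbb R^d$, with $\lambda_j=1/\bar\sigma^2$ and $\gamma_i=1/\bar\sigma_j^2$ for $i\in\mathcal I_j$. Expectations are over all randomness in the model. *)

From HB Require Import structures.
From mathcomp Require Import all_boot all_order all_algebra.
From mathcomp Require Import all_classical all_reals all_analysis.
From mathcomp Require Import normal_distribution.

Set Implicit Arguments.
Unset Strict Implicit.
Unset Printing Implicit Defensive.

Import Order.TTheory GRing.Theory Num.Theory.
Local Open Scope classical_set_scope.
Local Open Scope ring_scope.

Definition mutually_independent {d} {T : measurableType d} {R : realType}
  (P : probability T R) (I : finType) (X : I -> T -> R) : Prop :=
  (forall i, measurable_fun setT (X i)) /\
  forall (J : {set I}) (B : I -> set R), (forall j, measurable (B j)) ->
    P (\big[setI/setT]_(j in J) (X j @^-1` B j)) =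
    (\prod_(j in J) P (X j @^-1` B j))%E.

(* X has the normal distribution N(0, v) (v is the VARIANCE;
   normal_prob takes the standard deviation). *)
Definition has_normal_law {d} {T : measurableType d} {R : realType}
  (P : probability T R) (X : T -> R) (v : R) : Prop :=
  forall B : set R, measurable B -> P (X @^-1` B) = normal_prob 0 (Num.sqrt v) B.

Definition sqnorm {R : realType} {m : nat} (v : 'cV[R]_m) : R :=
  \sum_(a < m) (v a 0) ^+ 2.

(* Index type of all scalar noise coordinates:
   (cluster j, coordinate a) for bar xi_j, (client i, coordinate a) for xi_i,
   (client i, sample r < n_i) for eps_i. *)
Definition noise_index (n k d : nat) (ni : 'I_n -> nat) : finType :=
  (('I_k * 'I_d) + ('I_n * 'I_d) + {i : 'I_n & 'I_(ni i)})%type.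
Arguments noise_index : clear implicits.

Definition noise_coord {T : Type} {R : realType} (n k d : nat)
  (ni : 'I_n -> nat)
  (xibar : 'I_k -> T -> 'cV[R]_d) (xi : 'I_n -> T -> 'cV[R]_d)
  (eps : forall i : 'I_n, T -> 'cV[R]_(ni i))
  (z : noise_index n k d ni) : T -> R :=
  match z with
  | inl (inl (j, a)) => fun w => xibar j w a 0
  | inl (inr (i, a)) => fun w => xi i w a 0
  | inr (existT i r) => fun w => eps i w r 0
  end.

Definition noise_var {R : realType} (n k d : nat) (ni : 'I_n -> nat)
  (c : 'I_n -> 'I_k) (sbar2 : R) (sbarj2 : 'I_k -> R) (s2 : 'I_n -> R)
  (z : noise_index n k d ni) : R :=
  match z with
  | inl (inl _) => sbar2
  | inl (inr (i, _)) => sbarj2 (c i)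
  | inr (existT i _) => s2 i
  end.

Definition theta_star {T : Type} {R : realType} (n k d : nat)
  (c : 'I_n -> 'I_k) (thetabar : 'cV[R]_d)
  (xibar : 'I_k -> T -> 'cV[R]_d) (xi : 'I_n -> T -> 'cV[R]_d)
  (i : 'I_n) (w : T) : 'cV[R]_d :=
  thetabar + xibar (c i) w + xi i w.

Definition obs {T : Type} {R : realType} (n k d : nat) (ni : 'I_n -> nat)
  (c : 'I_n -> 'I_k) (X : forall i : 'I_n, 'M[R]_(ni i, d))
  (thetabar : 'cV[R]_d)
  (xibar : 'I_k -> T -> 'cV[R]_d) (xi : 'I_n -> T -> 'cV[R]_d)
  (eps : forall i : 'I_n, T -> 'cV[R]_(ni i)) (i : 'I_n) (w : T)
  : 'cV[R]_(ni i) :=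
  X i *m theta_star c thetabar xibar xi i w + eps i w.

(* The hierarchical objective, with lambda_j = 1/sbar2, gamma_i = 1/sbarj2_{c i}. *)
Definition hier_obj {R : realType} (n k d : nat) (ni : 'I_n -> nat)
  (c : 'I_n -> 'I_k) (X : forall i : 'I_n, 'M[R]_(ni i, d))
  (sbar2 : R) (sbarj2 : 'I_k -> R) (s2 : 'I_n -> R)
  (yv : forall i : 'I_n, 'cV[R]_(ni i))
  (theta : 'I_n -> 'cV[R]_d) (wv : 'I_k -> 'cV[R]_d) (wbar : 'cV[R]_d) : R :=
  \sum_(j < k)
    ( (sbar2^-1 / 2) * sqnorm (wv j - wbar)
    + \sum_(i < n | c i == j)
        ( (2 * s2 i)^-1 * sqnorm (yv i - X i *m theta i)
        + ((sbarj2 j)^-1 / 2) * sqnorm (theta i - wv j))).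

From HB Require Import structures.
From mathcomp Require Import all_boot all_order all_algebra.
From mathcomp Require Import all_classical all_reals all_analysis.
From mathcomp Require Import normal_distribution.
From mathcomp Require Import ring lra.
Import Order.TTheory GRing.Theory Num.Theory.
Local Open Scope ring_scope.
Set Implicit Arguments.
Unset Strict Implicit.
Unset Printing Implicit Defensive.

(* The hierarchical estimator is itself linear and unbiased, so it can serve as the
   competitor. At a minimiser every directional derivative of the objective vanishes:
     gam_i (theta_i - w_(c i)) = s2_i^-1 X_i^T (y_i - X_i theta_i),
     lam (w_j - wbar) = sum_(c i = j) gam_i (theta_i - w_j),     sum_j (w_j - wbar) = 0.
   As X_i^T X_i = beta_i I, these equations decouple coordinatewise, and eliminating theta_i,
   then w_j, then wbar gives theta_i = sum_i' q_(i,i') u_i' with u_i' = X_i'^T y_i' / beta_i'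
   and deterministic weights q. The constant solution theta = w = wbar = u = 1 shows that
   sum_i' q_(i,i') = 1, i.e. sum_i' L_i' X_i' = I for L_i' = q_(i,i') X_i'^T / beta_i'.
   Hence the linear estimator coincides with theta_hat_i and the inequality is an equality. *)

Section DotProduct.
Variables (R : realType) (m : nat).
Implicit Types u v w : 'cV[R]_m.

Definition cvdot u v : R := (u^T *m v) 0 0.

Lemma cvdotC u v : cvdot u v = cvdot v u.
Proof.
have <- : (u^T *m v)^T 0 0 = cvdot u v by rewrite mxE.
by rewrite trmx_mul trmxK.
Qed.

Lemma cvdotDr u v w : cvdot u (v + w) = cvdot u v + cvdot u w.
Proof. by rewrite /cvdot mulmxDr mxE. Qed.

Lemma cvdotZr u a v : cvdot u (a *: v) = a * cvdot u v.
Proof. by rewrite /cvdot -scalemxAr mxE. Qed.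

Lemma cvdotNr u v : cvdot u (- v) = - cvdot u v.
Proof. by rewrite -scaleN1r cvdotZr mulN1r. Qed.

Lemma cvdot0r u : cvdot u 0 = 0.
Proof. by rewrite /cvdot mulmx0 mxE. Qed.

Lemma cvdotDl u v w : cvdot (u + v) w = cvdot u w + cvdot v w.
Proof. by rewrite cvdotC cvdotDr !(cvdotC w). Qed.

Lemma cvdotZl a u v : cvdot (a *: u) v = a * cvdot u v.
Proof. by rewrite cvdotC cvdotZr cvdotC. Qed.

Lemma cvdotNl u v : cvdot (- u) v = - cvdot u v.
Proof. by rewrite cvdotC cvdotNr cvdotC. Qed.

Lemma cvdot_suml (I : Type) (r : seq I) (P : pred I) (F : I -> 'cV[R]_m) v :
  cvdot (\sum_(x <- r | P x) F x) v = \sum_(x <- r | P x) cvdot (F x) v.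
Proof.
elim/big_rec2: _ => [|x a s _ <-]; last by rewrite cvdotDl.
by rewrite cvdotC cvdot0r.
Qed.

Lemma sqnorm_cvdot u : sqnorm u = cvdot u u.
Proof. by rewrite /cvdot mxE; apply: eq_bigr => a _; rewrite mxE expr2. Qed.

Lemma sqnormDZ u t v :
  sqnorm (u + t *: v) = sqnorm u + t * (2 * cvdot u v) + t ^+ 2 * sqnorm v.
Proof. by rewrite !sqnorm_cvdot !cvdotDl !cvdotDr !cvdotZl !cvdotZr (cvdotC v); ring. Qed.

Lemma sqnorm_eq0 u : sqnorm u = 0 -> u = 0.
Proof.
move/eqP; rewrite /sqnorm psumr_eq0 => [/allP u0|a _]; last exact: sqr_ge0.
apply/matrixP => a b; rewrite (ord1 b) mxE.
by apply/eqP; rewrite -sqrf_eq0; exact: u0 (mem_index_enum a).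
Qed.

Lemma cvdot_eq0l u : (forall v, cvdot u v = 0) -> u = 0.
Proof. by move=> u0; apply: sqnorm_eq0; rewrite sqnorm_cvdot u0. Qed.

End DotProduct.

Lemma cvdot_mulmxr (R : realType) p m (A : 'M[R]_(p, m)) u v :
  cvdot u (A *m v) = cvdot (A^T *m u) v.
Proof. by rewrite /cvdot trmx_mul trmxK mulmxA. Qed.

Lemma lincoef_eq0_of_quadratic_ge0 (R : realFieldType) (D Q : R) :
  (forall t, 0 <= t * D + t ^+ 2 * Q) -> D = 0.
Proof.
move=> quad_ge0; set e := (`|Q| + 1)^-1.
have Q1_gt0 : 0 < `|Q| + 1 by have := normr_ge0 Q; lra.
have e_gt0 : 0 < e by rewrite invr_gt0.
have eQ_lt1 : e * Q < 1.
  have : e * Q < e * (`|Q| + 1) by rewrite ltr_pM2l //; have := ler_norm Q; lra.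
  by rewrite mulVf // gt_eqF.
have := quad_ge0 (- D * e).
have -> : (- D * e) * D + (- D * e) ^+ 2 * Q = D ^+ 2 * (e * (e * Q - 1)) by ring.
have coef_lt0 : e * (e * Q - 1) < 0 by rewrite pmulr_rlt0 // subr_lt0.
move=> h; apply/eqP; rewrite -sqrf_eq0 eq_le sqr_ge0 andbT leNgt.
by apply/negP => D2_gt0; move: h; rewrite leNgt pmulr_rlt0 ?coef_lt0.
Qed.

Lemma sum_fibers (V : nmodType) (I J : finType) (c : I -> J) (F : I -> J -> V) :
  \sum_(j : J) \sum_(i | c i == j) F i j = \sum_(i : I) F i (c i).
Proof.
rewrite (partition_big c xpredT) //=; apply: eq_bigr => j _.
by apply: eq_bigr => i /eqP ->.
Qed.

Section Objective.
Variables (R : realType) (n k d : nat) (c : 'I_n -> 'I_k) (ni : 'I_n -> nat)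
  (X : forall i : 'I_n, 'M[R]_(ni i, d)) (sbar2 : R) (sbarj2 : 'I_k -> R)
  (s2 : 'I_n -> R) (yv : forall i : 'I_n, 'cV[R]_(ni i)).

Definition obj_by_client (th : 'I_n -> 'cV[R]_d) (w : 'I_k -> 'cV[R]_d) b :=
  \sum_(j < k) (sbar2^-1 / 2) * sqnorm (w j - b) +
  \sum_(i < n) ((2 * s2 i)^-1 * sqnorm (yv i - X i *m th i)
               + ((sbarj2 (c i))^-1 / 2) * sqnorm (th i - w (c i))).

Lemma hier_objE th w b : hier_obj c X sbar2 sbarj2 s2 yv th w b = obj_by_client th w b.
Proof.
rewrite /hier_obj /obj_by_client big_split /=; congr (_ + _).
exact: (sum_fibers c (fun i j => (2 * s2 i)^-1 * sqnorm (yv i - X i *m th i)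
                                  + ((sbarj2 j)^-1 / 2) * sqnorm (th i - w j))).
Qed.

Definition obj_deriv th w b (Ht : 'I_n -> 'cV[R]_d) (Hw : 'I_k -> 'cV[R]_d) Hb :=
  \sum_(j < k) (sbar2^-1 / 2) * (2 * cvdot (w j - b) (Hw j - Hb)) +
  \sum_(i < n) ((2 * s2 i)^-1 * (2 * cvdot (yv i - X i *m th i) (- (X i *m Ht i)))
     + ((sbarj2 (c i))^-1 / 2) * (2 * cvdot (th i - w (c i)) (Ht i - Hw (c i)))).

Definition obj_curv (Ht : 'I_n -> 'cV[R]_d) (Hw : 'I_k -> 'cV[R]_d) Hb :=
  \sum_(j < k) (sbar2^-1 / 2) * sqnorm (Hw j - Hb) +
  \sum_(i < n) ((2 * s2 i)^-1 * sqnorm (- (X i *m Ht i))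
               + ((sbarj2 (c i))^-1 / 2) * sqnorm (Ht i - Hw (c i))).

Section QuadraticInT.
Variable t : R.

Lemma mulr_quadratic (l a b e : R) :
  l * (a + t * b + t ^+ 2 * e) = l * a + t * (l * b) + t ^+ 2 * (l * e).
Proof. by ring. Qed.

Lemma addr_quadratic (a b e a' b' e' : R) :
  (a + t * b + t ^+ 2 * e) + (a' + t * b' + t ^+ 2 * e')
  = (a + a') + t * (b + b') + t ^+ 2 * (e + e').
Proof. by ring. Qed.

Lemma sum_quadratic (I : Type) (r : seq I) (P : pred I) (a b e : I -> R) :
  \sum_(i <- r | P i) (a i + t * b i + t ^+ 2 * e i) =
  \sum_(i <- r | P i) a i + t * \sum_(i <- r | P i) b i
    + t ^+ 2 * \sum_(i <- r | P i) e i.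
Proof. by rewrite !big_split /= -!mulr_sumr. Qed.

End QuadraticInT.

Lemma obj_by_client_perturb th w b Ht Hw Hb t :
  obj_by_client (fun i => th i + t *: Ht i) (fun j => w j + t *: Hw j) (b + t *: Hb)
  = obj_by_client th w b + t * obj_deriv th w b Ht Hw Hb + t ^+ 2 * obj_curv Ht Hw Hb.
Proof.
have subDZ m (u v x y : 'cV[R]_m) : (u + t *: x) - (v + t *: y) = (u - v) + t *: (x - y).
  by rewrite opprD addrACA scalerBr.
have resDZ i : yv i - X i *m (th i + t *: Ht i)
               = (yv i - X i *m th i) + t *: (- (X i *m Ht i)).
  by rewrite mulmxDr -scalemxAr scalerN opprD addrA.
rewrite /obj_by_client /obj_deriv /obj_curv.
under eq_bigr do rewrite subDZ sqnormDZ mulr_quadratic.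
under [X in _ + X = _]eq_bigr do rewrite subDZ resDZ !sqnormDZ !mulr_quadratic addr_quadratic.
by rewrite !sum_quadratic addr_quadratic.
Qed.

Lemma obj_deriv_eq0 th w b :
  (forall th' w' b', obj_by_client th w b <= obj_by_client th' w' b') ->
  forall Ht Hw Hb, obj_deriv th w b Ht Hw Hb = 0.
Proof.
move=> th_min Ht Hw Hb; apply: (@lincoef_eq0_of_quadratic_ge0 _ _ (obj_curv Ht Hw Hb)) => t.
have := th_min (fun i => th i + t *: Ht i) (fun j => w j + t *: Hw j) (b + t *: Hb).
rewrite obj_by_client_perturb; lra.
Qed.

End Objective.

Section Stationarity.
Variables (R : realType) (n k d : nat) (c : 'I_n -> 'I_k) (ni : 'I_n -> nat)
  (X : forall i : 'I_n, 'M[R]_(ni i, d)) (sbar2 : R) (sbarj2 : 'I_k -> R)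
  (s2 : 'I_n -> R) (yv : forall i : 'I_n, 'cV[R]_(ni i)).
Hypotheses (sbar2_gt0 : 0 < sbar2) (sbarj2_gt0 : forall j, 0 < sbarj2 j)
  (s2_gt0 : forall i, 0 < s2 i).
Variables (th : 'I_n -> 'cV[R]_d) (w : 'I_k -> 'cV[R]_d) (b : 'cV[R]_d).
Hypothesis th_min : forall th' w' b',
  obj_by_client c X sbar2 sbarj2 s2 yv th w b
  <= obj_by_client c X sbar2 sbarj2 s2 yv th' w' b'.

Let deriv0 := obj_deriv_eq0 th_min.

Lemma stationary_client i0 :
  (sbarj2 (c i0))^-1 *: (th i0 - w (c i0)) =
  (s2 i0)^-1 *: ((X i0)^T *m (yv i0 - X i0 *m th i0)).
Proof.
apply/eqP; rewrite -subr_eq0; apply/eqP; apply: cvdot_eq0l => h.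
have := deriv0 (fun i => if i == i0 then h else 0) (fun _ => 0) 0.
rewrite /obj_deriv big1 ?add0r; last by move=> j _; rewrite ?subr0 ?oppr0 cvdot0r !mulr0.
rewrite (bigD1 i0) //= eqxx big1 ?addr0; last first.
  by move=> i /negbTE ->; rewrite mulmx0 oppr0 subrr !cvdot0r !mulr0 addr0.
rewrite subr0 cvdotNr cvdot_mulmxr => deriv_i0.
rewrite cvdotDl cvdotNl !cvdotZl -[RHS]deriv_i0.
by field; rewrite !gt_eqF.
Qed.

Lemma stationary_cluster j0 :
  sbar2^-1 *: (w j0 - b) =
  \sum_(i < n | c i == j0) (sbarj2 (c i))^-1 *: (th i - w (c i)).
Proof.
apply/eqP; rewrite -subr_eq0; apply/eqP; apply: cvdot_eq0l => h.
have := deriv0 (fun _ => 0) (fun j => if j == j0 then h else 0) 0.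
rewrite /obj_deriv (bigD1 j0) //= eqxx big1 ?addr0; last first.
  by move=> j /negbTE ->; rewrite subrr cvdot0r !mulr0.
rewrite subr0 [X in _ + X](_ : _ =
    - \sum_(i < n | c i == j0) (sbarj2 (c i))^-1 * cvdot (th i - w (c i)) h).
  move=> deriv_j0; rewrite cvdotDl cvdotNl cvdot_suml cvdotZl -[RHS]deriv_j0.
  by under eq_bigr do rewrite cvdotZl; field; rewrite gt_eqF.
rewrite [in RHS]big_mkcond -sumrN; apply: eq_bigr => i _.
rewrite mulmx0 oppr0 cvdot0r !mulr0 add0r sub0r cvdotNr.
by case: (c i == j0); rewrite ?cvdot0r ?oppr0 ?mulr0 ?oppr0 //; field; rewrite gt_eqF.
Qed.

Lemma stationary_center : \sum_(j < k) (w j - b) = 0.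
Proof.
apply: cvdot_eq0l => h.
have := deriv0 (fun _ => 0) (fun _ => 0) h.
rewrite /obj_deriv [X in _ + X]big1 ?addr0; last first.
  by move=> i _; rewrite mulmx0 oppr0 subrr !cvdot0r !mulr0 addr0.
rewrite (eq_bigr (fun j => - (sbar2^-1 * cvdot (w j - b) h))) => [|j _]; last first.
  by rewrite sub0r cvdotNr; field; rewrite gt_eqF.
rewrite sumrN -mulr_sumr cvdot_suml => /eqP.
by rewrite oppr_eq0 mulf_eq0 invr_eq0 (gt_eqF sbar2_gt0) => /eqP.
Qed.

End Stationarity.

Section Weights.
Variables (R : realType) (n k : nat) (c : 'I_n -> 'I_k)
  (beta : 'I_n -> R) (sbar2 : R) (sbarj2 : 'I_k -> R) (s2 : 'I_n -> R).
Hypotheses (c_surj : forall j : 'I_k, exists i : 'I_n, c i = j)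
  (beta_gt0 : forall i, 0 < beta i)
  (sbar2_gt0 : 0 < sbar2) (sbarj2_gt0 : forall j, 0 < sbarj2 j)
  (s2_gt0 : forall i, 0 < s2 i).

(* Eliminating in turn: theta_i is the precision-weighted mean of u_i and w_(c i); then w_j
   shrinks the rho-weighted mean of its clients' u towards wbar; then sum_j (w_j - wbar) = 0
   determines wbar. *)
Definition alpha i := beta i / s2 i.
Definition gam i := (sbarj2 (c i))^-1.
Definition lam := sbar2^-1.
Definition rho i := alpha i * gam i / (alpha i + gam i).
Definition rho_cluster j := \sum_(i < n | c i == j) rho i.
Definition shrink_total := \sum_(j < k) rho_cluster j / (lam + rho_cluster j).
Definition center_weight i := rho i / (shrink_total * (lam + rho_cluster (c i))).
Definition cluster_weight j i :=
  ((if c i == j then rho i else 0) + lam * center_weight i) / (lam + rho_cluster j).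
Definition client_weight i0 i :=
  (if i == i0 then alpha i0 / (alpha i0 + gam i0) else 0)
  + gam i0 / (alpha i0 + gam i0) * cluster_weight (c i0) i.

Lemma alpha_gt0 i : 0 < alpha i. Proof. by rewrite divr_gt0. Qed.
Lemma gam_gt0 i : 0 < gam i. Proof. by rewrite invr_gt0. Qed.
Lemma lam_gt0 : 0 < lam. Proof. by rewrite invr_gt0. Qed.

Lemma alpha_gam_neq0 i : alpha i + gam i != 0.
Proof. by rewrite gt_eqF // addr_gt0 ?alpha_gt0 ?gam_gt0. Qed.

Lemma rho_gt0 i : 0 < rho i.
Proof.
have a_gt0 := alpha_gt0 i; have g_gt0 := gam_gt0 i.
by apply: divr_gt0; [apply: mulr_gt0 | apply: addr_gt0].
Qed.

Lemma rho_cluster_gt0 j : 0 < rho_cluster j.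
Proof.
have [i <-] := c_surj j; rewrite /rho_cluster (bigD1 i) //= ltr_pwDl ?rho_gt0 //.
by rewrite sumr_ge0 // => i' _; exact/ltW/rho_gt0.
Qed.

Lemma lam_rho_gt0 j : 0 < lam + rho_cluster j.
Proof. by rewrite addr_gt0 ?lam_gt0 ?rho_cluster_gt0. Qed.

Lemma shrink_total_gt0 (j0 : 'I_k) : 0 < shrink_total.
Proof.
have term_gt0 j : 0 < rho_cluster j / (lam + rho_cluster j).
  by rewrite divr_gt0 ?rho_cluster_gt0 ?lam_rho_gt0.
rewrite /shrink_total (bigD1 j0) //= ltr_pwDl //.
by rewrite sumr_ge0 // => j _; exact/ltW.
Qed.

Section Solve.
Variables (th u : 'I_n -> R) (w : 'I_k -> R) (b : R).
Hypothesis client_eq : forall i, gam i * (th i - w (c i)) = alpha i * (u i - th i).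
Hypothesis cluster_eq :
  forall j, lam * (w j - b) = \sum_(i < n | c i == j) gam i * (th i - w (c i)).
Hypothesis center_eq : \sum_(j < k) (w j - b) = 0.

Lemma client_solution i :
  th i = alpha i / (alpha i + gam i) * u i + gam i / (alpha i + gam i) * w (c i).
Proof.
have nz := alpha_gam_neq0 i; apply/eqP; rewrite -subr_eq0; apply/eqP.
rewrite [LHS](_ : _ = (gam i * (th i - w (c i)) - alpha i * (u i - th i))
                      / (alpha i + gam i)); last by field.
by rewrite client_eq subrr mul0r.
Qed.

Lemma cluster_solution j :
  w j = (\sum_(i < n | c i == j) rho i * u i + lam * b) / (lam + rho_cluster j).
Proof.
have shrink : lam * (w j - b) = \sum_(i < n | c i == j) rho i * u i - rho_cluster j * w j.
  rewrite cluster_eq /rho_cluster mulr_suml -sumrB; apply: eq_bigr => i /eqP <-.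
  rewrite client_solution /rho; have := alpha_gam_neq0 i.
  by move=> nz; field.
have nz := lt0r_neq0 (lam_rho_gt0 j); apply/eqP; rewrite -subr_eq0; apply/eqP.
rewrite [LHS](_ : _ = (lam * (w j - b) - (\sum_(i < n | c i == j) rho i * u i
                      - rho_cluster j * w j)) / (lam + rho_cluster j)); last by field.
by rewrite shrink subrr mul0r.
Qed.

(* [i0] only witnesses [n > 0]: for [n = 0] nothing constrains [b]. *)
Lemma center_solution (i0 : 'I_n) : b = \sum_(i < n) center_weight i * u i.
Proof.
have S_gt0 := shrink_total_gt0 (c i0).
set U := fun j => \sum_(i < n | c i == j) rho i * u i.
have : \sum_(j < k) (w j - b) =
       \sum_(j < k) U j / (lam + rho_cluster j) - b * shrink_total.
  rewrite /shrink_total mulr_sumr -sumrB; apply: eq_bigr => j _.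
  by rewrite cluster_solution -/(U j); have := lt0r_neq0 (lam_rho_gt0 j) => nz; field.
rewrite center_eq => /eqP; rewrite eq_sym subr_eq0 => /eqP sumU.
rewrite -[b](mulfK (lt0r_neq0 S_gt0)) -sumU /U.
under eq_bigr do rewrite mulr_suml.
rewrite (sum_fibers c (fun i j => rho i * u i / (lam + rho_cluster j))) mulr_suml.
apply: eq_bigr => i _; rewrite /center_weight.
have := lt0r_neq0 (lam_rho_gt0 (c i)); have := lt0r_neq0 S_gt0.
by move=> nzS nz; field; rewrite nzS nz.
Qed.

Lemma cluster_solution_linear (i0 : 'I_n) j : w j = \sum_(i < n) cluster_weight j i * u i.
Proof.
have nz := lt0r_neq0 (lam_rho_gt0 j).
rewrite cluster_solution (center_solution i0) /cluster_weight.
under [RHS]eq_bigr do rewrite mulrAC mulrDl.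
rewrite -mulr_suml big_split /= mulr_sumr; congr ((_ + _) / _).
- by rewrite big_mkcond; apply: eq_bigr => i _; case: ifP; rewrite ?mul0r.
- by apply: eq_bigr => i _; rewrite mulrA.
Qed.

Lemma client_solution_linear i0 : th i0 = \sum_(i < n) client_weight i0 i * u i.
Proof.
rewrite client_solution (cluster_solution_linear i0) /client_weight.
under [RHS]eq_bigr do rewrite mulrDl.
rewrite big_split /= mulr_sumr; congr (_ + _); last first.
  by apply: eq_bigr => i _; rewrite mulrA.
by rewrite (bigD1 i0) //= eqxx big1 ?addr0 // => i /negbTE ->; rewrite mul0r.
Qed.

End Solve.

Lemma client_weight_sum1 i0 : \sum_(i < n) client_weight i0 i = 1.
Proof.
transitivity (\sum_(i < n) client_weight i0 i * 1).
  by apply: eq_bigr => i _; rewrite mulr1.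
symmetry; apply: (@client_solution_linear (fun _ => 1) (fun _ => 1) (fun _ => 1) 1).
- by move=> i; rewrite !subrr !mulr0.
- by move=> j /=; rewrite subrr mulr0 big1 // => i _; rewrite ?subrr mulr0.
- by rewrite big1 // => j _; rewrite subrr.
Qed.

End Weights.

Section HierEstimator.
Variables (R : realType) (n k d : nat) (c : 'I_n -> 'I_k) (ni : 'I_n -> nat)
  (X : forall i : 'I_n, 'M[R]_(ni i, d)) (beta : 'I_n -> R)
  (sbar2 : R) (sbarj2 : 'I_k -> R) (s2 : 'I_n -> R).
Hypotheses (c_surj : forall j : 'I_k, exists i : 'I_n, c i = j)
  (beta_gt0 : forall i, 0 < beta i) (XtX : forall i, (X i)^T *m X i = beta i *: 1%:M)
  (sbar2_gt0 : 0 < sbar2) (sbarj2_gt0 : forall j, 0 < sbarj2 j)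
  (s2_gt0 : forall i, 0 < s2 i).

Definition hier_gain i i' : 'M[R]_(d, ni i') :=
  (client_weight c beta sbar2 sbarj2 s2 i i' / beta i') *: (X i')^T.

Lemma hier_gain_unbiased i : \sum_(i' < n) hier_gain i i' *m X i' = 1%:M.
Proof.
under eq_bigr do rewrite -scalemxAl XtX scalerA divfK ?gt_eqF //.
by rewrite -scaler_suml client_weight_sum1 ?scale1r.
Qed.

Lemma hier_minimizer_linear (yv : forall i : 'I_n, 'cV[R]_(ni i)) th w b :
  (forall th' w' b', hier_obj c X sbar2 sbarj2 s2 yv th w b
                     <= hier_obj c X sbar2 sbarj2 s2 yv th' w' b') ->
  forall i, th i = \sum_(i' < n) hier_gain i i' *m yv i'.
Proof.
move=> th_min i.
have {}th_min th' w' b' : obj_by_client c X sbar2 sbarj2 s2 yv th w b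
                          <= obj_by_client c X sbar2 sbarj2 s2 yv th' w' b'.
  by rewrite -!hier_objE.
pose u i' := (beta i')^-1 *: ((X i')^T *m yv i').
have client_eq i' : gam c sbarj2 i' *: (th i' - w (c i'))
                    = alpha beta s2 i' *: (u i' - th i').
  rewrite /gam (stationary_client sbarj2_gt0 s2_gt0 th_min) mulmxBr mulmxA XtX.
  rewrite -scalemxAl mul1mx /alpha /u !scalerBr !scalerA mulrAC.
  by rewrite divff ?gt_eqF // mul1r mulrC.
apply/matrixP => a z; rewrite (ord1 z) summxE.
rewrite (@client_solution_linear _ _ _ c beta sbar2 sbarj2 s2 c_surj beta_gt0
  sbar2_gt0 sbarj2_gt0 s2_gt0 (fun i' => th i' a 0) (fun i' => u i' a 0)
  (fun j => w j a 0) (b a 0)).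
- by apply: eq_bigr => i' _; rewrite /hier_gain -scalemxAl !mxE mulrA.
- by move=> i'; have := congr1 (fun M : 'cV[R]_d => M a 0) (client_eq i'); rewrite /= !mxE.
- move=> j; have := stationary_cluster sbar2_gt0 sbarj2_gt0 th_min j.
  move/(congr1 (fun M : 'cV[R]_d => M a 0)).
  by rewrite /= !mxE summxE => ->; apply: eq_bigr => i' _; rewrite !mxE.
- have := congr1 (fun M : 'cV[R]_d => M a 0) (stationary_center sbar2_gt0 th_min).
  by rewrite /= summxE mxE => sum0; rewrite -[RHS]sum0; apply: eq_bigr => j _; rewrite !mxE.
Qed.

End HierEstimator.

Theorem mainTheorem13
  (R : realType) (dT : measure_display) (T : measurableType dT)
  (P : probability T R)
  (n k d : nat) (c : 'I_n -> 'I_k)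
  (c_surj : forall j : 'I_k, exists i : 'I_n, c i = j)
  (ni : 'I_n -> nat) (X : forall i : 'I_n, 'M[R]_(ni i, d))
  (beta : 'I_n -> R) (beta_pos : forall i, 0 < beta i)
  (XtX : forall i, (X i)^T *m X i = beta i *: 1%:M)
  (sbar2 : R) (sbarj2 : 'I_k -> R) (s2 : 'I_n -> R)
  (sbar2_pos : 0 < sbar2) (sbarj2_pos : forall j, 0 < sbarj2 j)
  (s2_pos : forall i, 0 < s2 i)
  (thetabar : 'cV[R]_d)
  (xibar : 'I_k -> T -> 'cV[R]_d) (xi : 'I_n -> T -> 'cV[R]_d)
  (eps : forall i : 'I_n, T -> 'cV[R]_(ni i))
  (indep : mutually_independent P (noise_coord xibar xi eps))
  (gauss : forall z, has_normal_law P (noise_coord xibar xi eps z)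
                       (noise_var c sbar2 sbarj2 s2 z))
  (thetahat : T -> 'I_n -> 'cV[R]_d)
  (thetahat_min : forall w : T, exists (wv : 'I_k -> 'cV[R]_d) (wbar : 'cV[R]_d),
      forall theta' wv' wbar',
        hier_obj c X sbar2 sbarj2 s2 (obs c X thetabar xibar xi eps ^~ w)
                 (thetahat w) wv wbar
        <= hier_obj c X sbar2 sbarj2 s2 (obs c X thetabar xibar xi eps ^~ w)
                 theta' wv' wbar')
  (i : 'I_n) :
  exists L : forall i' : 'I_n, 'M[R]_(d, ni i'),
    \sum_(i' < n) L i' *m X i' = 1%:M /\
    (\int[P]_w (sqnorm (\sum_(i' < n) L i' *m obs c X thetabar xibar xi eps i' w
                        - theta_star c thetabar xibar xi i w))%:E
     <= \int[P]_w (sqnorm (thetahat w i - theta_star c thetabar xibar xi i w))%:E)%E.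
Proof.
pose L := hier_gain c X beta sbar2 sbarj2 s2 i.
exists L; split; first exact: hier_gain_unbiased.
have L_obs_eq w :
    \sum_(i' < n) L i' *m obs c X thetabar xibar xi eps i' w = thetahat w i.
  have [wv [wbar th_min]] := thetahat_min w.
  by rewrite (hier_minimizer_linear c_surj beta_pos XtX sbar2_pos sbarj2_pos s2_pos th_min).
by under eq_integral do rewrite L_obs_eq.
Qed.
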